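(* Let $F$ be a field and let $G$ be a bipartite graph with bipartition $(X,Y)$, where $|X|=m$, $|Y|=n$ and $m\le n$. Suppose $\mathcal{R}_F(G)\neq\emptyset$, and let $H$ be the subgraph obtained from $G$ by deleting $k$ vertices of $X$. Then $$f(H\Box K_2)=m-k.$$
   Context: All graphs are finite and simple. For a graph $H$ with a perfect matching $M$, a subset $S\subseteq M$ is a forcing set of $M$ if $S$ is contained in no other perfect matching of $H$; $f(H,M)$ is the minimum size of a forcing set of $M$, and $f(H)$ is the minimum of $f(H,M)$ over all perfect matchings $M$ of $H$. For a bipartite graph $G$ with bipartition $(X,Y)$, a weighted bi-adjacency matrix of $G$ over $F$ is an $|X|\times|Y|$ matrix over $F$, rows indexed by $X$ and columns by $Y$, whose $(x,y)$ entry is nonzero iff $x$ and $y$ are adjacent. $\mathcal{R}_F(G)$ denotes the set of weighted bi-adjacency matrices $B$ of $G$ over $F$ for which there is another weighted bi-adjacency matrix $C$ of $G$ over $F$ (same row/column indexing) with $BC^{\top}=I_{|X|}$. $K_2$ is the complete graph on two vertices, and $G\Box H$ is the Cartesian product: vertex set $V(G)\times V(H)$, with $(g_1,h_1)\sim(g_2,h_2)$ iff either $g_1=g_2$ and $h_1h_2\in E(H)$, or $h_1=h_2$ and $g_1g_2\in E(G)$. *)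

From mathcomp Require Import all_boot all_order all_algebra.
Set Implicit Arguments. Unset Strict Implicit. Unset Printing Implicit Defensive.
Import GRing.Theory.
Local Open Scope ring_scope.

(* A (simple) graph is given by an adjacency relation e : rel T on a finType T.
   An edge is represented as the 2-element vertex set {u, v} with e u v. *)
Section Matchings.
Variable T : finType.
Variable e : rel T.

Definition edge_set (M : {set {set T}}) : bool :=
  [forall E in M, [exists u, [exists v, e u v && (E == [set u; v])]]].

Definition perfect_matching (M : {set {set T}}) : bool :=
  edge_set M && [forall v, #|[set E in M | v \in E]| == 1%N].

Definition forcing_set (M S : {set {set T}}) : bool :=
  (S \subset M) &&
  [forall M' : {set {set T}}, (perfect_matching M' && (S \subset M')) ==> (M' == M)].

(* f(H, M): minimum size of a forcing set of M (M itself is always forcing) *)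
Definition forcing_num (M : {set {set T}}) : nat :=
  \big[minn/#|M|]_(S : {set {set T}} | forcing_set M S) #|S|.

Definition min_forcing_num : nat :=
  \big[minn/#|T|]_(M : {set {set T}} | perfect_matching M) forcing_num M.
End Matchings.

Definition cart_prod (T1 T2 : finType) (e1 : rel T1) (e2 : rel T2) : rel (T1 * T2) :=
  fun p q => ((p.1 == q.1) && e2 p.2 q.2) || ((p.2 == q.2) && e1 p.1 q.1).

Definition K2 : rel bool := fun a b => a != b.

Definition induced (T : finType) (e : rel T) (A : {set T}) : rel {v : T | v \in A} :=
  fun u v => e (val u) (val v).

Definition bip_graph (m n : nat) (adj : 'I_m -> 'I_n -> bool) : rel ('I_m + 'I_n) :=
  fun u v => match u, v with
             | inl x, inr y => adj x y
             | inr y, inl x => adj x y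
             | _, _ => false
             end.

Definition weighted_biadj (F : fieldType) (m n : nat) (adj : 'I_m -> 'I_n -> bool)
  (B : 'M[F]_(m, n)) : Prop :=
  forall i j, (B i j != 0) = adj i j.

Definition R_F (F : fieldType) (m n : nat) (adj : 'I_m -> 'I_n -> bool) : 'M[F]_(m, n) -> Prop :=
  fun B => weighted_biadj adj B /\
    exists C : 'M[F]_(m, n), weighted_biadj adj C /\ B *m C^T = 1%:M.

Definition delete_X (m n : nat) (adj : 'I_m -> 'I_n -> bool) (S : {set 'I_m}) :=
  @induced ('I_m + 'I_n)%type (bip_graph adj) (~: [set (inl x : 'I_m + 'I_n) | x in S]).
Arguments delete_X {m n} adj S.
Arguments induced {T} e A.

From mathcomp Require Import all_boot all_order all_algebra perm zify.
Set Implicit Arguments. Unset Strict Implicit. Unset Printing Implicit Defensive.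
Import Order.TTheory GRing.Theory.

(* The vertices of H □ K2 split into the side (x, 0), (y, 1) and the side
   (x, 1), (y, 0), for x in X \ S and y in Y.  Upper bound: the perfect
   matching {(v, 0)(v, 1)} is forced by its m - k edges at the vertices of
   X \ S, because every (y, b) then has only (y, 1 - b) left as a partner.
   Lower bound: for a perfect matching M and a forcing set S', let U be the
   vertices of the first side whose M-edge is not in S', so that
   m + n - k <= |U| + |S'|.  Weight the edges by the block matrix
   W = [[B, I], [I, C^T]], where B C^T = I.  Forcing makes the U x M(U)
   submatrix of W nonsingular: a permutation with a nonzero diagonal in it
   would give a second perfect matching containing S'.  Since W = [B; I] [I, C^T]
   has rank at most n, |U| <= n and hence |S'| >= m - k. *)

Section Matchings.
Variables (T : finType) (e : rel T).

Definition mate (M : {set {set T}}) (v : T) : T := odflt v [pick u | [set v; u] \in M].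

Definition matching_of (f : T -> T) : {set {set T}} := [set [set v; f v] | v : T].

Lemma perfect_matching_of f :
  involutive f -> (forall v, e v (f v)) -> perfect_matching e (matching_of f).
Proof.
move=> fK e_f; apply/andP; split.
  apply/forallP => E; apply/implyP => /imsetP [v _ ->].
  by apply/existsP; exists v; apply/existsP; exists (f v); rewrite e_f eqxx.
apply/forallP => v; apply/cards1P; exists [set v; f v].
apply/setP => E; rewrite !inE; apply/idP/idP.
  by case/andP => /imsetP [u _ ->] /set2P [] ->; rewrite ?fK 1?setUC.
by move/eqP ->; rewrite set21 andbT; apply: imset_f.
Qed.

Lemma min_forcing_num_le M S :
  perfect_matching e M -> forcing_set e M S -> (min_forcing_num e <= #|S|)%N.
Proof.
move=> pmM fS; apply: leq_trans (_ : forcing_num e M <= _)%N.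
  by have := bigmin_le_cond #|T| (forcing_num e) pmM; rewrite minEnat leEnat.
by have := bigmin_le_cond #|M| (fun S0 : {set {set T}} => #|S0|) fS; rewrite minEnat leEnat.
Qed.

Hypotheses (e_sym : symmetric e) (e_irr : irreflexive e).

Section PerfectMatching.
Variable M : {set {set T}}.
Hypothesis pmM : perfect_matching e M.

Lemma matching_vertex_unique v E1 E2 :
  E1 \in M -> E2 \in M -> v \in E1 -> v \in E2 -> E1 = E2.
Proof.
case/andP: pmM => _ /forallP /(_ v) /cards1P [E defE] E1M E2M vE1 vE2.
have : E1 \in [set E in M | v \in E] by rewrite inE E1M vE1.
have : E2 \in [set E in M | v \in E] by rewrite inE E2M vE2.
by rewrite defE !inE => /eqP -> /eqP ->.
Qed.

Lemma matching_pair_edge u v : [set u; v] \in M -> e u v.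
Proof.
case/andP: pmM => /forallP /(_ [set u; v]) /implyP h _ /h.
case/existsP => a /existsP [b /andP [eab /eqP Euv]].
have /set2P ua : u \in [set a; b] by rewrite -Euv set21.
have /set2P va : v \in [set a; b] by rewrite -Euv set22.
have /set2P bu : b \in [set u; v] by rewrite Euv set22.
have /set2P au : a \in [set u; v] by rewrite Euv set21.
have nab : a != b by apply: contraTneq eab => ->; rewrite e_irr.
case: ua va => ? [] ?; subst => //; last 2 first.
- by rewrite e_sym.
- by case: au => ab; rewrite ab eqxx in nab.
- by case: bu => ba; rewrite ba eqxx in nab.
Qed.

Lemma matching_coverP v : exists2 E, E \in M & v \in E.
Proof.
case/andP: pmM => _ /forallP /(_ v) /cards1P [E defE].
by have := set11 E; rewrite -defE inE => /andP [EM vE]; exists E.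
Qed.

Lemma matching_pairP E : E \in M -> exists u v, E = [set u; v].
Proof.
case/andP: pmM => /forallP /(_ E) /implyP h _ /h.
by case/existsP => u /existsP [v /andP [_ /eqP ->]]; exists u, v.
Qed.

Lemma mate_in_matching v : [set v; mate M v] \in M.
Proof.
rewrite /mate; case: pickP => [u // | none] /=.
have [E EM vE] := matching_coverP v; have [a [b defE]] := matching_pairP EM.
move: vE EM; rewrite defE => /set2P [] <- EM; first by have := none b; rewrite EM.
by have := none a; rewrite setUC EM.
Qed.

Lemma mate_eq v u : [set v; u] \in M -> mate M v = u.
Proof.
move=> vuM; have := matching_vertex_unique vuM (mate_in_matching v) (set21 _ _) (set21 _ _).
move=> defE; have /set2P [uv|//] : u \in [set v; mate M v] by rewrite -defE set22.
by have := matching_pair_edge vuM; rewrite uv e_irr.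
Qed.

Lemma mate_edge v : e v (mate M v).
Proof. exact: matching_pair_edge (mate_in_matching v). Qed.

Lemma mateK : involutive (mate M).
Proof. by move=> v; apply: mate_eq; rewrite setUC mate_in_matching. Qed.

Lemma matching_of_mate : matching_of (mate M) = M.
Proof.
apply/setP => E; apply/imsetP/idP => [[v _ ->] | EM]; first exact: mate_in_matching.
have [a [b defE]] := matching_pairP EM.
by exists a => //; rewrite defE (mate_eq (_ : [set a; b] \in M)) // -defE.
Qed.

End PerfectMatching.

Lemma mate_matching_of f :
  involutive f -> (forall v, e v (f v)) -> mate (matching_of f) =1 f.
Proof.
move=> fK e_f v; apply: (mate_eq (perfect_matching_of fK e_f)).
exact: imset_f.
Qed.

Lemma forcing_set_refl M : perfect_matching e M -> forcing_set e M M.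
Proof.
move=> pmM; rewrite /forcing_set subxx; apply/forallP => M'.
apply/implyP => /andP [pmM' /subsetP sMM']; apply/eqP.
rewrite -(matching_of_mate pmM') -(matching_of_mate pmM); apply: eq_imset => v.
by rewrite (mate_eq pmM' (sMM' _ (mate_in_matching pmM v))).
Qed.

Lemma min_forcing_num_ge c :
  (c <= #|T|)%N ->
  (forall M S, perfect_matching e M -> forcing_set e M S -> c <= #|S|)%N ->
  (c <= min_forcing_num e)%N.
Proof.
move=> cT c_forcing.
have := @le_bigmin _ _ _ (index_enum _) (forcing_num e) _ _ (perfect_matching e) cT.
rewrite minEnat leEnat; apply=> M pmM.
have := @le_bigmin _ _ _ (index_enum _) (fun S : {set {set T}} => #|S|) #|M| _ _.
rewrite minEnat leEnat; apply; first exact: c_forcing pmM (forcing_set_refl pmM).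
by move=> S; apply: c_forcing pmM.
Qed.

End Matchings.

Local Open Scope ring_scope.

Section ExtendPerm.
Variables (T : finType) (A : {set T}).

Definition extend_perm (s : 'S_#|A|) (v : T) : T :=
  if [pick i | enum_val i == v] is Some i then enum_val (s i) else v.

Lemma extend_perm_enum s i : extend_perm s (enum_val i) = enum_val (s i).
Proof.
rewrite /extend_perm; case: pickP => [j /eqP /enum_val_inj -> // | none].
by have := none i; rewrite eqxx.
Qed.

Lemma extend_perm_out s v : v \notin A -> extend_perm s v = v.
Proof.
move=> vA; rewrite /extend_perm; case: pickP => [i /eqP defv | //].
by rewrite -defv enum_valP in vA.
Qed.

Lemma extend_permK s : cancel (extend_perm s) (extend_perm s^-1).
Proof.
move=> v; have [vA | /[dup] vA /extend_perm_out -> ] := boolP (v \in A).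
  by rewrite -(enum_rankK_in vA vA) !extend_perm_enum permK.
by rewrite extend_perm_out.
Qed.

End ExtendPerm.

Lemma det_neq0_unique_perm (R : idomainType) n (A : 'M[R]_n) :
  (forall i, A i i != 0) ->
  (forall s : 'S_n, (forall i, A i (s i) != 0) -> s = 1%g) -> \det A != 0.
Proof.
move=> diagA only1; rewrite /determinant (bigD1 (1%g : 'S_n)) //= [X in _ + X]big1 ?addr0.
  by rewrite odd_perm1 expr0 mul1r; apply/prodf_neq0 => i _; rewrite perm1.
move=> s /eqP s1; case: (pickP (fun i => A i (s i) == 0)) => [i /eqP Ai0 | nz].
  by rewrite (bigD1 i) //= Ai0 mul0r mulr0.
by case: s1; apply: only1 => i; rewrite nz.
Qed.

Section ForcingLowerBound.
Variables (F : fieldType) (T : finType) (e : rel T) (P : pred T).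
Hypotheses (e_sym : symmetric e) (e_bip : forall u v, e u v -> P u != P v).

Lemma bipartite_irr : irreflexive e.
Proof. by move=> v; apply/negP => /e_bip; rewrite eqxx. Qed.

Variables (M S : {set {set T}}).
Hypotheses (pmM : perfect_matching e M) (fS : forcing_set e M S).

Let mateMK := mateK e_sym bipartite_irr pmM.
Let mateM_edge := mate_edge e_sym bipartite_irr pmM.

Lemma mate_side v : P (mate M v) = ~~ P v.
Proof. by have := e_bip (mateM_edge v); case: (P v); case: (P _). Qed.

Definition unforced := [set v | P v & [set v; mate M v] \notin S].

Lemma card_side_le : (#|[set v | P v]| <= #|unforced| + #|S|)%N.
Proof.
pose forced := [set v | P v & [set v; mate M v] \in S].
have forced_inj : {in forced &, injective (fun v => [set v; mate M v])}.
  move=> u v; rewrite !inE => /andP [Pu _] /andP [Pv _] Euv.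
  have /set2P [// | umv] : u \in [set v; mate M v] by rewrite -Euv set21.
  by move: Pu; rewrite umv mate_side Pv.
apply: (@leq_trans #|unforced :|: forced|).
  by apply/subset_leq_card/subsetP => v; rewrite !inE; case: (P v); case: (_ \in S).
apply: leq_trans (leq_card_setU _ _) _; rewrite leq_add2l -(card_in_imset forced_inj).
apply/subset_leq_card/subsetP => _ /imsetP [v + ->]; by rewrite inE => /andP [_ ->].
Qed.

Lemma unforced_perm_trivial (s : 'S_#|unforced|) :
  (forall i, e (enum_val i) (mate M (enum_val (s i)))) -> s = 1%g.
Proof.
move=> e_s; case/andP: fS => /subsetP sSM /forallP forcing.
pose sigma := extend_perm s; pose pi v := extend_perm s^-1 (mate M (sigma v)).
have sigmaK : cancel (extend_perm s^-1) sigma.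
  by rewrite /sigma -{2}(invgK s); apply: extend_permK.
have mate_unforced v : v \in unforced -> mate M v \notin unforced.
  by rewrite !inE mate_side => /andP [-> _].
have pi_enum i : pi (enum_val i) = mate M (enum_val (s i)).
  by rewrite /pi /sigma extend_perm_enum extend_perm_out // mate_unforced ?enum_valP.
have piK : involutive pi by move=> v; rewrite /pi sigmaK mateMK extend_permK.
have pi_edge v : e v (pi v).
  have [vU | vU] := boolP (v \in unforced).
    by rewrite -(enum_rankK_in vU vU) pi_enum.
  have [piU | piU] := boolP (pi v \in unforced).
    by have := e_s (enum_rank_in piU (pi v)); rewrite -pi_enum enum_rankK_in // piK e_sym.
  suff -> : pi v = mate M v by exact: mateM_edge.
  have pi_v := sigmaK (mate M (sigma v)).
  by rewrite -/(pi v) /sigma !extend_perm_out in pi_v.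
have pi_forced v : [set v; mate M v] \in S -> pi v = mate M v.
  move=> vS; have vU : v \notin unforced by rewrite inE vS andbF.
  have mvU : mate M v \notin unforced by rewrite inE mateMK setUC vS andbF.
  by rewrite /pi /sigma !extend_perm_out.
have S_pi : S \subset matching_of pi.
  apply/subsetP => E ES; move: (sSM E ES) (ES).
  rewrite -(matching_of_mate e_sym bipartite_irr pmM) => /imsetP [v _ ->] /pi_forced <-.
  exact: imset_f.
have pi_mate : matching_of pi = M.
  by apply/eqP/(implyP (forcing _)); rewrite (perfect_matching_of piK pi_edge).
apply/permP => i; rewrite perm1; apply/enum_val_inj/(can_inj mateMK).
by rewrite -pi_enum -(mate_matching_of e_sym bipartite_irr piK pi_edge) pi_mate.
Qed.

Variable w : T -> T -> F.
Hypothesis w_supp : forall u v, P u -> (w u v != 0) = e u v.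

Definition unforced_mx : 'M[F]_#|unforced| :=
  \matrix_(i, j) w (enum_val i) (mate M (enum_val j)).

Lemma unforced_mx_unit : unforced_mx \in unitmx.
Proof.
have P_enum (i : 'I_#|unforced|) : P (enum_val i).
  by have := enum_valP i; rewrite inE => /andP [].
rewrite unitmxE unitfE; apply: det_neq0_unique_perm => [i | s nz_s].
  by rewrite mxE w_supp ?mateM_edge.
by apply: unforced_perm_trivial => i; have := nz_s i; rewrite mxE w_supp.
Qed.

Lemma card_unforced_le r (L : T -> 'I_r -> F) (R : 'I_r -> T -> F) :
  (forall u v, w u v = \sum_(y < r) L u y * R y v) -> (#|unforced| <= r)%N.
Proof.
move=> w_fact; rewrite -(mxrank_unit unforced_mx_unit).
have -> : unforced_mx =
    \matrix_(i, y) L (enum_val i) y *m \matrix_(y, j) R y (mate M (enum_val j)).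
  by apply/matrixP => i j; rewrite !mxE w_fact; apply: eq_bigr => y _; rewrite !mxE.
exact: leq_trans (mxrankM_maxl _ _) (rank_leq_col _).
Qed.

Lemma forcing_set_card_ge r (L : T -> 'I_r -> F) (R : 'I_r -> T -> F) :
  (forall u v, w u v = \sum_(y < r) L u y * R y v) ->
  (#|[set v | P v]| <= #|S| + r)%N.
Proof.
move=> w_fact; apply: leq_trans card_side_le _.
by rewrite addnC leq_add2l (card_unforced_le w_fact).
Qed.

End ForcingLowerBound.

Section CartesianK2.
Variables (m n : nat) (adj : 'I_m -> 'I_n -> bool) (S : {set 'I_m}).

Local Notation V := {v : 'I_m + 'I_n | v \in ~: [set inl x | x in S]}.
Local Notation T := (V * bool)%type.
Local Notation e := (cart_prod (delete_X adj S) K2).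

Definition is_X (a : 'I_m + 'I_n) : bool := if a is inl _ then true else false.

Definition side (w : T) : bool := is_X (val w.1) != w.2.

Lemma inr_vertex (y : 'I_n) : (inr y : 'I_m + 'I_n) \in ~: [set inl x | x in S].
Proof. by rewrite in_setC; apply/imsetP => -[]. Qed.

Definition Y_vertex (y : 'I_n) : V := exist _ (inr y) (inr_vertex y).

Lemma cart_edgeE u v : e u v =
  (u.1 == v.1) && (u.2 != v.2) || (u.2 == v.2) && bip_graph adj (val u.1) (val v.1).
Proof. by []. Qed.

Lemma cart_sym : symmetric e.
Proof.
move=> u v; rewrite !cart_edgeE (eq_sym u.1) (eq_sym u.2).
by case: (val u.1) => ?; case: (val v.1).
Qed.

Lemma cart_bip u v : e u v -> side u != side v.
Proof.
case: u v => [a b] [c d]; rewrite cart_edgeE /side /=.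
case/orP => [/andP [/eqP -> ] | /andP [/eqP -> ]]; first by case: (is_X _); case: b; case: d.
by case: (val a) => ?; case: (val c) => ? //=; case: d.
Qed.

Lemma cart_irr : irreflexive e.
Proof. exact: bipartite_irr cart_bip. Qed.

Lemma card_side : #|[set w | side w]| = (m + n - #|S|)%N.
Proof.
have -> : [set w | side w] = [set (v, ~~ is_X (val v)) | v : V].
  apply/setP => -[v b]; rewrite inE; apply/idP/imsetP => [side_vb | [v' _ [-> ->]]].
    by exists v => //; move: side_vb; rewrite /side /=; case: b; case: is_X.
  by rewrite /side /=; case: is_X.
rewrite card_imset; last by move=> v v' [].
rewrite card_sig; have := cardsC [set (inl x : 'I_m + 'I_n) | x in S].
rewrite card_imset ?card_sum ?card_ord => [<- | ]; last exact: inl_inj.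
by rewrite addKn; apply: eq_card.
Qed.

Definition flip (w : T) : T := (w.1, ~~ w.2).

Lemma flipK : involutive flip.
Proof. by case=> v b; rewrite /flip negbK. Qed.

Lemma flip_edge w : e w (flip w).
Proof. by rewrite cart_edgeE eqxx /=; case: w.2. Qed.

Definition X_layer0 : {set T} := [set w | is_X (val w.1) && ~~ w.2].

Definition flip_forcing_set := [set [set w; flip w] | w in X_layer0].

Lemma flip_forcing : forcing_set e (matching_of flip) flip_forcing_set.
Proof.
apply/andP; split.
  by apply/subsetP => _ /imsetP [w _ ->]; apply: imset_f.
apply/forallP => M; apply/implyP => /andP [pmM /subsetP sub].
have mateMK := mateK cart_sym cart_irr pmM.
have mate_X w : is_X (val w.1) -> mate M w = flip w.
  move=> Xw; have [w2 | w2] := boolP w.2.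
    have : [set flip w; flip (flip w)] \in M by apply/sub/imset_f; rewrite inE Xw /= w2.
    by rewrite flipK => /(mate_eq cart_sym cart_irr pmM) mfw; rewrite -[in LHS]mfw mateMK.
  apply: (mate_eq cart_sym cart_irr pmM).
  by apply/sub/imset_f; rewrite inE Xw.
have mate_flip w : mate M w = flip w.
  have [Xw | Yw] := boolP (is_X (val w.1)); first exact: mate_X.
  have := mate_edge cart_sym cart_irr pmM w.
  have [Xu | Yu] := boolP (is_X (val (mate M w).1)).
    have defw : w = flip (mate M w) by rewrite -mate_X // mateMK.
    by move: Yw; rewrite defw /= Xu.
  case: w (mate M w) Yw Yu => [v b] [v' b'] /= Yv Yv'; rewrite cart_edgeE /=.
  case/orP => [/andP [/eqP <- ] | /andP [_]]; first by rewrite /flip; case: b; case: b'.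
  by move: Yv Yv'; case: (val v); case: (val v').
apply/eqP; rewrite -(matching_of_mate cart_sym cart_irr pmM).
by apply: eq_imset => w; rewrite mate_flip.
Qed.

Lemma card_flip_forcing_set : (#|flip_forcing_set| <= m - #|S|)%N.
Proof.
pose Y_layer1 := [set (Y_vertex y, true) | y : 'I_n].
apply: leq_trans (leq_imset_card _ _) _.
apply: (@leq_trans #|[set w | side w] :\: Y_layer1|).
  apply/subset_leq_card/subsetP => -[[[x|y] vP] [|]]; rewrite !inE //= andbT.
  by move=> _; apply/imsetP => -[y _ []].
rewrite cardsD card_side (setIidPr _); last first.
  by apply/subsetP => _ /imsetP [y _ ->]; rewrite inE.
rewrite card_imset ?card_ord; first by lia.
by move=> y y' [].
Qed.

Variables (F : fieldType) (B C : 'M[F]_(m, n)).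
Hypotheses (B_supp : weighted_biadj adj B) (C_supp : weighted_biadj adj C).
Hypothesis BC : B *m C^T = 1%:M.

Definition weight (u v : T) : F :=
  match val u.1, u.2, val v.1, v.2 with
  | inl x, false, inr y, false => B x y
  | inl x, false, inl x', true => (x == x')%:R
  | inr y, true, inr y', false => (y == y')%:R
  | inr y, true, inl x, true => C x y
  | _, _, _, _ => 0
  end.

Definition row_weight (u : T) (y : 'I_n) : F :=
  match val u.1, u.2 with
  | inl x, false => B x y
  | inr y', true => (y' == y)%:R
  | _, _ => 0
  end.

Lemma weight_factor u v :
  weight u v = \sum_(y < n) row_weight u y * weight (Y_vertex y, true) v.
Proof.
case: u => [[[x|y0] ?] []]; rewrite /row_weight /=.
- by rewrite big1 // => y _; rewrite mul0r.
- case: v => [[[x'|y'] ?] []]; rewrite /weight /=.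
  + have := congr1 (fun A : 'M_m => A x x') BC; rewrite !mxE => <-.
    by apply: eq_bigr => y _; rewrite mxE.
  + by rewrite big1 // => y _; rewrite mulr0.
  + by rewrite big1 // => y _; rewrite mulr0.
  + rewrite (bigD1 y') //= eqxx mulr1 big1 ?addr0 // => y /negbTE ->.
    by rewrite mulr0.
- rewrite (bigD1 y0) //= eqxx mul1r big1 ?addr0 // => y.
  by rewrite eq_sym => /negbTE ->; rewrite mul0r.
- by rewrite big1 // => y _; rewrite mul0r.
Qed.

Lemma weight_supp u v : side u -> (weight u v != 0) = e u v.
Proof.
case: u v => [[a ha] b] [[c hc] d]; rewrite cart_edgeE /weight /side -val_eqE /=.
case: a ha => [x|y] _; case: c hc => [x'|y'] _; case: b; case: d => //= _;
  rewrite ?andbF ?orbF ?andbT ?orbT ?B_supp ?C_supp ?eqxx //;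
  rewrite ?(inj_eq inl_inj) ?(inj_eq inr_inj).
- by case: (x == x'); rewrite ?oner_eq0 ?eqxx.
- by case: (y == y'); rewrite ?oner_eq0 ?eqxx.
Qed.

Lemma min_forcing_num_cart : min_forcing_num e = (m - #|S|)%N.
Proof.
have card_S : (#|S| <= m)%N by have := max_card S; rewrite card_ord.
apply/eqP; rewrite eqn_leq; apply/andP; split.
  have pm_flip := perfect_matching_of flipK flip_edge.
  exact: leq_trans (min_forcing_num_le pm_flip flip_forcing) card_flip_forcing_set.
apply: (min_forcing_num_ge cart_sym cart_irr) => [|M S' pmM fS'].
  apply: leq_trans (max_card [set w | side w]); rewrite card_side; lia.
have := forcing_set_card_ge cart_sym cart_bip pmM fS' weight_supp weight_factor.
rewrite card_side; lia.
Qed.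

End CartesianK2.

Theorem corollary3p3 (F : fieldType) (m n k : nat) (adj : 'I_m -> 'I_n -> bool)
  (S : {set 'I_m}) :
  (m <= n)%N ->
  (exists B : 'M[F]_(m, n), R_F adj B) ->
  #|S| = k ->
  min_forcing_num (cart_prod (delete_X adj S) K2) = (m - k)%N.
Proof.
move=> _ [B [B_supp [C [C_supp BC]]]] <-.
exact: min_forcing_num_cart B_supp C_supp BC.
Qed.
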